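(* Let $L,M\geq 1$, let $\{u\}_L=\{u_1,\ldots,u_L\}$ and $\{w\}_M=\{w_1,\ldots,w_M\}$ be complex variables, and write $\bar u_l=u_l+\gamma$, $\{\bar u\}_L=\{\bar u_1,\ldots,\bar u_L\}$. To each $u_l$ associate an auxiliary space $V_{a_l}\cong\mathbb{C}^2$ and to each $w_m$ a quantum space $V_m\cong\mathbb{C}^2$. Define $$T\big(\{u\}_L,\{w\}_M\big)=T_{a_L}(u_L,\{w\}_M)\cdots T_{a_1}(u_1,\{w\}_M),$$ an operator on $V_{a_1}\otimes\cdots\otimes V_{a_L}\otimes V_1\otimes\cdots\otimes V_M$. For each $1\le m\le M$ let $T_m(w_m,\{\bar u\}_L)=R_{m a_1}(w_m,\bar u_1)\cdots R_{m a_L}(w_m,\bar u_L)$, regarded as a $2\times 2$ matrix in $V_m$ with entries $A(w_m,\{\bar u\}_L),B(w_m,\{\bar u\}_L),C(w_m,\{\bar u\}_L),D(w_m,\{\bar u\}_L)$ acting on $V_{a_1}\otimes\cdots\otimes V_{a_L}$, and set $$\overline{T}_m(w_m,\{\bar u\}_L)=\begin{pmatrix} D(w_m,\{\bar u\}_L) & -B(w_m,\{\bar u\}_L)\\ -C(w_m,\{\bar u\}_L) & A(w_m,\{\bar u\}_L)\end{pmatrix}_m .$$ Then $$T\big(\{u\}_L,\{w\}_M\big)=(-1)^{LM}\,\overline{T}_1(w_1,\{\bar u\}_L)\cdots \overline{T}_M(w_M,\{\bar u\}_L).$$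
   Context: Notation: $[x]=\sinh x$, and $\gamma$ is a fixed complex parameter. Each space $V_a\cong\mathbb{C}^2$ has basis $\uparrow=(1,0)^{T}$, $\downarrow=(0,1)^{T}$. For two such spaces $V_a,V_b$, the $R$-matrix $R_{ab}(u,v)\in\mathrm{End}(V_a\otimes V_b)$ is, in the ordered basis $(\uparrow\otimes\uparrow,\uparrow\otimes\downarrow,\downarrow\otimes\uparrow,\downarrow\otimes\downarrow)$ (first factor $V_a$), $$R_{ab}(u,v)=\begin{pmatrix}[u-v+\gamma]&0&0&0\\0&[u-v]&[\gamma]&0\\0&[\gamma]&[u-v]&0\\0&0&0&[u-v+\gamma]\end{pmatrix},$$ acting as the identity on all other tensor factors. For an auxiliary space $V_a$ and quantum spaces $V_1,\dots,V_M$, the monodromy matrix is $T_a(u,\{w\}_M)=R_{a1}(u,w_1)\cdots R_{aM}(u,w_M)$; writing it as a $2\times2$ matrix in $V_a$ (rows/columns indexed by $\uparrow,\downarrow$), $T_a(u,\{w\}_M)=\begin{pmatrix}A(u,\{w\}_M)&B(u,\{w\}_M)\\C(u,\{w\}_M)&D(u,\{w\}_M)\end{pmatrix}_a$ with entries acting on $V_1\otimes\cdots\otimes V_M$. The same convention defines $A,B,C,D$ for a monodromy matrix whose auxiliary space is a quantum space $V_m$ and whose ''sites'' are the spaces $V_{a_1},\dots,V_{a_L}$. *)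

From mathcomp Require Import all_boot all_algebra.
From mathcomp Require Import complex.
From mathcomp Require Import Rstruct.
From Stdlib Require Import Reals.

Set Implicit Arguments.
Unset Strict Implicit.
Unset Printing Implicit Defensive.

Import GRing.Theory.
Local Open Scope ring_scope.

Definition Cplx : Type := complex R.

Definition csinh (z : Cplx) : Cplx :=
  Complex (Rmult (sinh (Re z)) (cos (Im z))) (Rmult (cosh (Re z)) (sin (Im z))).

(* Basis of Cplx^2 : up = (1,0)^T (index 0), down = (0,1)^T (index 1). *)
Definition up : 'I_2 := ord0.
Definition down : 'I_2 := ord_max.

(* A basis state of the tensor product  (x)_{k in S} V_k,  V_k = Cplx^2. *)
Definition state (S : finType) := {ffun S -> 'I_2}.

(* Operators on (x)_{k in S} V_k, given by their matrix entries
   <s| O |t> in the product basis. *)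
Definition Op (S : finType) := state S -> state S -> Cplx.

Definition opmul (S : finType) (O1 O2 : Op S) : Op S :=
  fun s t => \sum_(r : state S) O1 s r * O2 r t.

Definition opone (S : finType) : Op S :=
  fun s t => if s == t then 1 else 0.

Definition opscale (S : finType) (c : Cplx) (O : Op S) : Op S :=
  fun s t => c * O s t.

Definition opopp (S : finType) (O : Op S) : Op S := fun s t => - O s t.

Definition opprod (S : finType) (l : seq (Op S)) : Op S :=
  foldr (@opmul S) (@opone S) l.

(* The 4x4 R-matrix R_{ab}(u,v) on V_a (x) V_b, entry in row (i1,i2),
   column (j1,j2) (first factor V_a), in the ordered basis
   (up up, up down, down up, down down). *)
Definition Rent (gamma u v : Cplx) (i1 i2 j1 j2 : 'I_2) : Cplx :=
  if (i1 == j1) && (i2 == j2) then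
    (if i1 == i2 then csinh (u - v + gamma) else csinh (u - v))
  else if [&& i1 == j2, i2 == j1 & i1 != i2] then csinh gamma
  else 0.

(* R_{ab}(u,v) acting on the sites a, b and as the identity on all others. *)
Definition Rop (S : finType) (gamma : Cplx) (a b : S) (u v : Cplx) : Op S :=
  fun s t =>
    Rent gamma u v (s a) (s b) (t a) (t b) *
    (if [forall k, ((k != a) && (k != b)) ==> (s k == t k)] then 1 else 0).

Definition upd (S : finType) (s : state S) (m : S) (i : 'I_2) : state S :=
  [ffun k => if k == m then i else s k].

(* For an operator O, viewed as a 2x2 matrix in the space V_m, its (i,j)
   entry (an operator on the remaining factors; it does not depend on the
   site-m components of its arguments). *)
Definition entry (S : finType) (O : Op S) (m : S) (i j : 'I_2) : Op S :=
  fun s t => O (upd s m i) (upd t m j).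

(* The operator whose 2x2 block matrix in V_m is X (X i j acting on the
   remaining factors). *)
Definition mx_in (S : finType) (m : S) (X : 'I_2 -> 'I_2 -> Op S) : Op S :=
  fun s t => X (s m) (t m) s t.

Definition Tbar (S : finType) (O : Op S) (m : S) : Op S :=
  let A := entry O m up up in
  let B := entry O m up down in
  let Cc := entry O m down up in
  let D := entry O m down down in
  mx_in m (fun i j =>
    if i == up then (if j == up then D else opopp B)
    else (if j == up then opopp Cc else A)).

(* Sites: the auxiliary spaces a_1..a_L are (inl l), the quantum spaces
   1..M are (inr m). *)
Definition site (L M : nat) : finType := ('I_L + 'I_M)%type.

Definition Taux (L M : nat) (gamma : Cplx) (u : 'I_L -> Cplx) (w : 'I_M -> Cplx)
  (l : 'I_L) : Op (site L M) :=
  opprod [seq Rop gamma (inl l : site L M) (inr m) (u l) (w m) | m <- enum 'I_M].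

Definition Tfull (L M : nat) (gamma : Cplx) (u : 'I_L -> Cplx) (w : 'I_M -> Cplx)
  : Op (site L M) :=
  opprod [seq Taux gamma u w l | l <- rev (enum 'I_L)].

Definition Tquant (L M : nat) (gamma : Cplx) (u : 'I_L -> Cplx) (w : 'I_M -> Cplx)
  (m : 'I_M) : Op (site L M) :=
  opprod [seq Rop gamma (inr m : site L M) (inl l) (w m) (u l + gamma)
         | l <- enum 'I_L].

From Stdlib Require Import Reals FunctionalExtensionality.
From mathcomp Require Import all_boot all_algebra.
From mathcomp Require Import complex.
From mathcomp Require Import Rstruct.
From mathcomp Require Import ring.

Set Implicit Arguments.
Unset Strict Implicit.
Unset Printing Implicit Defensive.

Import GRing.Theory.
Local Open Scope ring_scope.

(* [Tbar O m] is the partial transpose of [O] in V_m conjugated by sigma^y.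
   It therefore reverses a product [X Y] whenever the V_m-entries of [X]
   commute with those of [Y], e.g. when [X] acts on V_m (x) V_a only and [Y]
   acts trivially on V_a.  Crossing symmetry of the R-matrix,
   Tbar_m R_ma(x, y + gamma) = - R_am(y, x), which only uses that sinh is odd,
   then turns Tbar_m T_m(w_m, {ubar}) into
   (-1)^L R_(a_L m)(u_L, w_m) ... R_(a_1 m)(u_1, w_m).  Both sides of the
   theorem are now products of the same L M matrices R_(a_l m)(u_l, w_m), in
   two orders which differ only by swapping factors acting on disjoint pairs
   of spaces; such factors commute, so no Yang-Baxter relation is needed. *)

Lemma sinh_opp (x : R) : sinh (- x) = - sinh x.
Proof. by rewrite /sinh Ropp_involutive !RdivE !RminusE -mulNr opprB. Qed.

Lemma cosh_opp (x : R) : cosh (- x) = cosh x.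
Proof. by rewrite /cosh Ropp_involutive !RdivE !RplusE addrC. Qed.

Lemma csinh_opp (z : Cplx) : csinh (- z) = - csinh z.
Proof.
case: z => a b; rewrite /csinh /= sinh_opp cosh_opp -!RoppE cos_neg sin_neg.
by apply/eqP; rewrite eq_complex /= !RmultE !RoppE mulNr mulrN !eqxx.
Qed.

Local Notation "X *o Y" := (opmul X Y) (at level 40, left associativity).

Section OperatorAlgebra.
Variable S : finType.
Implicit Types (X Y Z : Op S) (c d : Cplx).

Lemma opext X Y : (forall s t, X s t = Y s t) -> X = Y.
Proof.
by move=> eqXY; do 2![apply: functional_extensionality => ?]; apply: eqXY.
Qed.

Lemma opmulA X Y Z : X *o (Y *o Z) = X *o Y *o Z.
Proof.
apply: opext => s t; rewrite /opmul.
under eq_bigr => q _ do rewrite big_distrr.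
rewrite exchange_big /=; apply: eq_bigr => r _; rewrite big_distrl /=.
by apply: eq_bigr => q _; rewrite mulrA.
Qed.

Lemma opmul1 X : X *o @opone S = X.
Proof.
apply: opext => s t; rewrite /opmul /opone (bigD1 t) //= eqxx mulr1.
by rewrite big1 ?addr0 // => r /negbTE->; rewrite mulr0.
Qed.

Lemma op1mul X : @opone S *o X = X.
Proof.
apply: opext => s t; rewrite /opmul /opone (bigD1 s) //= eqxx mul1r.
by rewrite big1 ?addr0 // => r; rewrite eq_sym => /negbTE->; rewrite mul0r.
Qed.

Lemma opmulZl c X Y : opscale c X *o Y = opscale c (X *o Y).
Proof.
by apply: opext => s t; rewrite /opmul /opscale big_distrr; apply: eq_bigr => r _; rewrite -mulrA.
Qed.

Lemma opmulZr c X Y : X *o opscale c Y = opscale c (X *o Y).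
Proof.
by apply: opext => s t; rewrite /opmul /opscale big_distrr; apply: eq_bigr => r _; rewrite mulrCA.
Qed.

Lemma opscaleA c d X : opscale c (opscale d X) = opscale (c * d) X.
Proof. by apply: opext => s t; rewrite /opscale mulrA. Qed.

Lemma opscale1 X : opscale 1 X = X.
Proof. by apply: opext => s t; rewrite /opscale mul1r. Qed.

Lemma opprod_cat (l1 l2 : seq (Op S)) : opprod (l1 ++ l2) = opprod l1 *o opprod l2.
Proof. by elim: l1 => [|X l IHl] /=; rewrite ?op1mul // IHl opmulA. Qed.

Lemma opprod_scale (I : Type) c (F : I -> Op S) (r : seq I) :
  opprod [seq opscale c (F i) | i <- r] = opscale (c ^+ size r) (opprod (map F r)).
Proof.
elim: r => [|i r IHr] /=; first by rewrite expr0 opscale1.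
by rewrite IHr opmulZr opmulZl opscaleA exprS mulrC.
Qed.

Lemma opprod_comm (I : eqType) (F : I -> Op S) (r : seq I) Y :
  (forall i, i \in r -> F i *o Y = Y *o F i) ->
  opprod (map F r) *o Y = Y *o opprod (map F r).
Proof.
elim: r => [|i r IHr] commFY /=; first by rewrite op1mul opmul1.
rewrite -opmulA IHr => [|j rj]; last by rewrite commFY // inE rj orbT.
by rewrite !opmulA commFY // mem_head.
Qed.

Lemma opprod_mul (I : eqType) (F G : I -> Op S) (r : seq I) : uniq r ->
  {in r &, forall i j, i != j -> F j *o G i = G i *o F j} ->
  opprod (map F r) *o opprod (map G r) = opprod [seq F i *o G i | i <- r].
Proof.
elim: r => [|i r IHr] /=; first by rewrite opmul1.
case/andP=> ri uniq_r commFG; rewrite -!opmulA; congr (_ *o _).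
rewrite opmulA opprod_comm => [|j rj].
  by rewrite -opmulA IHr // => j k rj rk; apply: commFG; rewrite inE ?rj ?rk orbT.
by apply: commFG; rewrite ?inE ?rj ?eqxx ?orbT //; apply: contraNneq ri => ->.
Qed.

Lemma opprod_exchange (I J : eqType) (F : I -> J -> Op S) (ri : seq I) (rj : seq J) :
  uniq ri -> uniq rj ->
  (forall i i' j j', i != i' -> j != j' -> F i j *o F i' j' = F i' j' *o F i j) ->
  opprod [seq opprod [seq F i j | j <- rj] | i <- ri] =
  opprod [seq opprod [seq F i j | i <- ri] | j <- rj].
Proof.
move=> + uniq_rj commF; elim: ri => [|i ri IHri] /=.
  by move=> _; elim: rj uniq_rj {commF} => //= j rj IHrj /andP[_ /IHrj <-]; rewrite op1mul.
case/andP=> ri_i uniq_ri; rewrite IHri // opprod_mul // => j j' _ _ jj'.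
symmetry; rewrite opprod_comm // => i' ri_i'.
by apply: commF => //; apply: contraNneq ri_i => <-.
Qed.

End OperatorAlgebra.

Section TwoSiteOperators.
Variable S : finType.
Implicit Types (s t : state S) (a b c d k m : S) (i j : 'I_2) (Z : Op S).

Lemma updE s m i k : upd s m i k = if k == m then i else s k.
Proof. by rewrite ffunE. Qed.

Lemma upd_same s m i : upd s m i m = i.
Proof. by rewrite updE eqxx. Qed.

Lemma upd_other s m i k : k != m -> upd s m i k = s k.
Proof. by rewrite updE => /negbTE->. Qed.

Lemma upd_upd s m i j : upd (upd s m i) m j = upd s m j.
Proof. by apply/ffunP => k; rewrite !updE; case: eqP. Qed.

Lemma updC s a b i j : a != b -> upd (upd s a i) b j = upd (upd s b j) a i.
Proof.
move=> ab; apply/ffunP => k; rewrite !updE.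
by case: (eqVneq k b) => [->|//]; rewrite eq_sym (negbTE ab).
Qed.

Lemma upd_id s m : upd s m (s m) = s.
Proof. by apply/ffunP => k; rewrite updE; case: eqP => [->|]. Qed.

Lemma eq_upd s t m i : s m = t m -> (upd s m i == upd t m i) = (s == t).
Proof.
move=> st_m; apply/eqP/eqP => [eq_upd_st|->//]; apply/ffunP => k.
by case: (eqVneq k m) => [->//|km]; rewrite -(upd_other s i km) eq_upd_st upd_other.
Qed.

Definition op2 a b (K : 'I_2 -> 'I_2 -> 'I_2 -> 'I_2 -> Cplx) : Op S :=
  fun s t => K (s a) (s b) (t a) (t b) *
    (if [forall k, ((k != a) && (k != b)) ==> (s k == t k)] then 1 else 0).

Lemma RopE g a b x y : Rop g a b x y = op2 a b (Rent g x y).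
Proof. by []. Qed.

Lemma op2C a b K : op2 a b K = op2 b a (fun i1 i2 j1 j2 => K i2 i1 j2 j1).
Proof. by apply: opext => s t; rewrite /op2; under eq_forallb do rewrite andbC. Qed.

Lemma opscale_op2 (c : Cplx) a b K :
  opscale c (op2 a b K) = op2 a b (fun i1 i2 j1 j2 => c * K i1 i2 j1 j2).
Proof. by apply: opext => s t; rewrite /opscale /op2 mulrA. Qed.

Lemma agree_off_upd s t a b i j :
  [forall k, (k != a) && (k != b) ==> (upd s a i k == upd t a j k)] =
  [forall k, (k != a) && (k != b) ==> (s k == t k)].
Proof.
by apply: eq_forallb => k; case: (eqVneq k a) => //= ka; rewrite !upd_other.
Qed.

Lemma sum_agree_off a b s (F : state S -> Cplx) : a != b ->
  \sum_(r : state S)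
     (if [forall k, ((k != a) && (k != b)) ==> (s k == r k)] then 1 else 0) * F r =
  \sum_i \sum_j F (upd (upd s a i) b j).
Proof.
move=> ab; under eq_bigr do rewrite (fun_if (fun x => x * _)) mul1r mul0r.
rewrite -big_mkcond pair_big /=.
rewrite (reindex_onto (fun ij : 'I_2 * 'I_2 => upd (upd s a ij.1) b ij.2)
                      (fun r => (r a, r b))) => [|r /forallP agree_sr]; last first.
  apply/ffunP => k; rewrite !updE.
  case: (eqVneq k b) => [->//|kb]; case: (eqVneq k a) => [->//|ka].
  by move: (agree_sr k); rewrite ka kb => /eqP.
apply: eq_bigl => -[i j] /=; rewrite upd_other // !upd_same eqxx andbT.
apply/forallP => k; apply/implyP => /andP[ka kb].
by rewrite !upd_other.
Qed.

Lemma mul_op2l a b K Z s t : a != b ->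
  (op2 a b K *o Z) s t =
  \sum_i \sum_j K (s a) (s b) i j * Z (upd (upd s a i) b j) t.
Proof.
move=> ab; rewrite /opmul /op2; under eq_bigr do rewrite mulrAC mulrC.
rewrite sum_agree_off //; apply: eq_bigr => i _; apply: eq_bigr => j _.
by rewrite upd_other // !upd_same.
Qed.

Lemma mul_op2r a b K Z s t : a != b ->
  (Z *o op2 a b K) s t =
  \sum_i \sum_j Z s (upd (upd t a i) b j) * K i j (t a) (t b).
Proof.
move=> ab; rewrite /opmul /op2; under eq_bigr do rewrite mulrA mulrC.
under eq_bigr do under eq_forallb do rewrite [_ == t _]eq_sym.
rewrite sum_agree_off //; apply: eq_bigr => i _; apply: eq_bigr => j _.
by rewrite upd_other // !upd_same.
Qed.

Lemma sum_if_eq2 (F : 'I_2 -> 'I_2 -> Cplx) i0 j0 :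
  \sum_i \sum_j (if (i == i0) && (j == j0) then F i j else 0) = F i0 j0.
Proof.
rewrite (bigD1 i0) //= [X in _ + X]big1 ?addr0 => [|i /negbTE->]; last exact: big1.
rewrite eqxx (bigD1 j0) //= eqxx [X in _ + X]big1 ?addr0 // => j /negbTE->.
by [].
Qed.

Definition agree_off4 a b c d s t :=
  [forall k, [&& k != a, k != b, k != c & k != d] ==> (s k == t k)].

Lemma agree_off_upd2 s t a b c d i j :
  a != b -> a != c -> a != d -> b != c -> b != d ->
  [forall k, (k != c) && (k != d) ==> (upd (upd s a i) b j k == t k)] =
  [&& i == t a, j == t b & agree_off4 a b c d s t].
Proof.
move=> ab ac ad bc bd.
apply/forallP/and3P => [agree_st|[/eqP-> /eqP-> /forallP agree_st] k].
  split.
  - by move: (agree_st a); rewrite ac ad upd_other // upd_same.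
  - by move: (agree_st b); rewrite bc bd upd_same.
  - apply/forallP => k; apply/implyP => /and4P[ka kb kc kd].
    by move: (agree_st k); rewrite kc kd !upd_other.
apply/implyP => /andP[kc kd].
case: (eqVneq k b) => [->|kb]; first by rewrite upd_same.
case: (eqVneq k a) => [->|ka]; first by rewrite upd_other // upd_same.
by rewrite !upd_other //; move: (agree_st k); rewrite ka kb kc kd.
Qed.

Lemma mul_op2_disjoint a b c d K1 K2 s t :
  a != b -> c != d -> a != c -> a != d -> b != c -> b != d ->
  (op2 a b K1 *o op2 c d K2) s t =
  K1 (s a) (s b) (t a) (t b) * K2 (s c) (s d) (t c) (t d) *
  (if agree_off4 a b c d s t then 1 else 0).
Proof.
move=> ab cd ac ad bc bd; rewrite mul_op2l //.
rewrite -[RHS](sum_if_eq2 (fun i j => K1 (s a) (s b) i j * K2 (s c) (s d) (t c) (t d) *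
                          (if agree_off4 a b c d s t then 1 else 0))).
apply: eq_bigr => i _; apply: eq_bigr => j _.
have [ca cb da db] : [/\ c != a, c != b, d != a & d != b] by rewrite !(eq_sym c) !(eq_sym d).
rewrite /op2 !upd_other // agree_off_upd2 //.
by case: (i == t a); case: (j == t b); case: agree_off4; rewrite /= ?mulr0 ?mulr1 ?mulrA.
Qed.

Lemma op2_comm a b c d K1 K2 :
  a != b -> c != d -> a != c -> a != d -> b != c -> b != d ->
  op2 a b K1 *o op2 c d K2 = op2 c d K2 *o op2 a b K1.
Proof.
move=> ab cd ac ad bc bd; apply: opext => s t.
have agreeC : agree_off4 c d a b s t = agree_off4 a b c d s t.
  by apply: eq_forallb => k; case: (k != a); case: (k != b); rewrite /= ?andbF ?andbT.
have [ca cb da db] : [/\ c != a, c != b, d != a & d != b] by rewrite !(eq_sym c) !(eq_sym d).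
by rewrite !mul_op2_disjoint // agreeC [K2 _ _ _ _ * _]mulrC.
Qed.

End TwoSiteOperators.

Definition flip (i : 'I_2) : 'I_2 := if i == up then down else up.

Definition eps (i j : 'I_2) : Cplx := if i == j then 1 else -1.

Lemma ord2_cases (i : 'I_2) : i = up \/ i = down.
Proof. by case: i => [[|[|n]] lt_i2] //; [left|right]; apply: val_inj. Qed.

Lemma flipK : involutive flip.
Proof. by move=> i; case: (ord2_cases i) => ->. Qed.

Lemma flip_neq (i j : 'I_2) : i != j -> flip j = i.
Proof. by case: (ord2_cases i) => ->; case: (ord2_cases j) => ->. Qed.

Lemma eps_trans (i j k : 'I_2) : eps i k * eps k j = eps i j.
Proof.
rewrite /eps; case: (ord2_cases i) => ->; case: (ord2_cases j) => ->;
  case: (ord2_cases k) => -> /=; rewrite ?mul1r ?mulrNN ?mulr1 //.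
Qed.

Lemma Rent_crossing g x y i1 i2 j1 j2 :
  eps i1 j1 * Rent g x (y + g) (flip j1) i2 (flip i1) j2 = - Rent g y x i2 i1 j2 j1.
Proof.
have sh1 : csinh (x - (y + g) + g) = - csinh (y - x) by rewrite -csinh_opp; congr csinh; ring.
have sh2 : csinh (x - (y + g)) = - csinh (y - x + g) by rewrite -csinh_opp; congr csinh; ring.
case: (ord2_cases i1) => ->; case: (ord2_cases i2) => ->;
  case: (ord2_cases j1) => ->; case: (ord2_cases j2) => ->;
  by rewrite /eps /Rent /flip /= ?sh1 ?sh2 ?mul1r ?mulN1r ?oppr0 ?opprK.
Qed.

Section Crossing.
Variable S : finType.
Implicit Types (s t : state S) (a m : S) (i j : 'I_2) (O Y : Op S).

Lemma TbarE O m s t :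
  Tbar O m s t = eps (s m) (t m) * O (upd s m (flip (t m))) (upd t m (flip (s m))).
Proof.
rewrite /Tbar /mx_in /entry /opopp /eps /flip.
by case: (ord2_cases (s m)) => ->; case: (ord2_cases (t m)) => ->; rewrite /= ?mul1r ?mulN1r.
Qed.

Lemma Tbar_one m : Tbar (@opone S) m = @opone S.
Proof.
apply: opext => s t; rewrite TbarE /opone /eps.
have [st_m|st_m] := eqVneq (s m) (t m); first by rewrite st_m eq_upd // mul1r.
have ts_m : t m != s m by rewrite eq_sym.
rewrite (flip_neq st_m) (flip_neq ts_m) !upd_id.
have -> : (s == t) = false by apply: contraNF st_m => /eqP->.
by rewrite mulr0.
Qed.

Definition trivial_at a Y :=
  forall s t, Y s t = if s a == t a then Y (upd s a up) (upd t a up) else 0.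

Lemma trivial_at_one a : trivial_at a (@opone S).
Proof.
move=> s t; rewrite /opone; have [st_a|st_a] := eqVneq (s a) (t a); first by rewrite eq_upd.
by have -> : (s == t) = false by apply: contraNF st_a => /eqP->.
Qed.

Lemma trivial_at_mul_op2 a b c K Y : b != c -> a != b -> a != c ->
  trivial_at a Y -> trivial_at a (op2 b c K *o Y).
Proof.
move=> bc ab ac trivY s t; have [ba ca] : b != a /\ c != a by split; rewrite eq_sym.
rewrite !mul_op2l // !upd_other //; case: ifP => st_a.
  apply: eq_bigr => i _; apply: eq_bigr => j _; rewrite trivY !upd_other // st_a.
  by rewrite (updC _ _ _ ca) // (updC _ _ _ ba).
by rewrite big1 // => i _; rewrite big1 // => j _; rewrite trivY !upd_other // st_a mulr0.
Qed.

Lemma sum_trivial_atl a Y (F : 'I_2 -> Cplx) s t : trivial_at a Y ->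
  \sum_j F j * Y (upd s a j) t = F (t a) * Y (upd s a up) (upd t a up).
Proof.
move=> trivY; under eq_bigr do rewrite trivY upd_same upd_upd (fun_if (fun x => F _ * x)) mulr0.
by rewrite -big_mkcond big_pred1_eq.
Qed.

Lemma sum_trivial_atr a Y (F : 'I_2 -> Cplx) s t : trivial_at a Y ->
  \sum_j Y s (upd t a j) * F j = F (s a) * Y (upd s a up) (upd t a up).
Proof.
move=> trivY; under eq_bigr do rewrite trivY upd_same upd_upd (fun_if (fun x => x * F _)) mul0r.
rewrite -big_mkcond (eq_bigl (pred1 (s a))) => [|j]; last by rewrite /= eq_sym.
by rewrite big_pred1_eq mulrC.
Qed.

Lemma Tbar_op2 m a K : m != a ->
  Tbar (op2 m a K) m = op2 m a (fun i1 i2 j1 j2 => eps i1 j1 * K (flip j1) i2 (flip i1) j2).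
Proof.
move=> ma; have am : a != m by rewrite eq_sym.
apply: opext => s t; rewrite TbarE /op2 !upd_same !upd_other // mulrA.
by rewrite agree_off_upd.
Qed.

Lemma Tbar_mul_op2 m a K Y : m != a -> trivial_at a Y ->
  Tbar (op2 m a K *o Y) m = Tbar Y m *o Tbar (op2 m a K) m.
Proof.
move=> ma trivY; have am : a != m by rewrite eq_sym.
apply: opext => s t; rewrite Tbar_op2 // TbarE mul_op2l // mul_op2r //.
rewrite upd_same upd_other // big_distrr (reindex_inj (can_inj flipK)) /=.
apply: eq_bigr => i _; under eq_bigr do rewrite upd_upd.
rewrite sum_trivial_atl // upd_other //.
under eq_bigr do rewrite TbarE (upd_other _ _ ma) upd_same (updC _ _ _ am) upd_upd mulrAC mulrC.
rewrite sum_trivial_atr // upd_other //.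
by rewrite -(eps_trans _ _ i); ring.
Qed.

Lemma Tbar_Rop g m a x y : m != a ->
  Tbar (Rop g m a x (y + g)) m = opscale (-1) (Rop g a m y x).
Proof.
move=> ma; rewrite !RopE Tbar_op2 // [in RHS]op2C opscale_op2.
by apply: opext => s t; rewrite /op2 Rent_crossing mulN1r.
Qed.

End Crossing.

Section ColumnProduct.
Variables (S : finType) (I : eqType) (f : I -> S) (m : S).
Hypotheses (f_inj : injective f) (f_neq_m : forall i, f i != m).
Variables (g x : Cplx) (y : I -> Cplx).

Lemma trivial_at_prod_Rop i0 (r : seq I) : i0 \notin r ->
  trivial_at (f i0) (opprod [seq Rop g m (f i) x (y i + g) | i <- r]).
Proof.
elim: r => [|i r IHr] /=; first by move=> _; exact: trivial_at_one.
rewrite inE negb_or => /andP[i0i i0r]; rewrite RopE.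
apply: trivial_at_mul_op2; last exact: IHr.
- by rewrite eq_sym.
- exact: f_neq_m.
- by rewrite (inj_eq f_inj).
Qed.

Lemma Tbar_prod_Rop (r : seq I) : uniq r ->
  Tbar (opprod [seq Rop g m (f i) x (y i + g) | i <- r]) m =
  opscale ((-1) ^+ size r) (opprod [seq Rop g (f i) m (y i) x | i <- rev r]).
Proof.
elim: r => [|i r IHr] /=; first by rewrite Tbar_one expr0 opscale1.
case/andP=> ri uniq_r; have mfi : m != f i by rewrite eq_sym.
rewrite RopE Tbar_mul_op2 //; last exact: trivial_at_prod_Rop.
rewrite -RopE Tbar_Rop // IHr //.
by rewrite rev_cons -cats1 map_cat opprod_cat /= opmul1 opmulZl opmulZr opscaleA exprS mulrC.
Qed.

End ColumnProduct.

Theorem lemma4 (L M : nat) (hL : leq 1 L) (hM : leq 1 M)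
  (gamma : Cplx) (u : 'I_L -> Cplx) (w : 'I_M -> Cplx) :
  Tfull gamma u w =
  opscale ((-1) ^+ (L * M))
    (opprod [seq Tbar (Tquant gamma u w m) (inr m : site L M) | m <- enum 'I_M]).
Proof.
have Tbar_Tquant m : Tbar (Tquant gamma u w m) (inr m : site L M) =
    opscale ((-1) ^+ L)
      (opprod [seq Rop gamma (inl l : site L M) (inr m) (u l) (w m) | l <- rev (enum 'I_L)]).
  by rewrite Tbar_prod_Rop ?enum_uniq ?size_enum_ord //; exact: inl_inj.
rewrite (eq_map Tbar_Tquant) opprod_scale opscaleA size_enum_ord -exprM.
rewrite -exprMn mulrNN mulr1 expr1n opscale1 /Tfull /Taux.
apply: (opprod_exchange (F := fun l m => Rop gamma (inl l : site L M) (inr m) (u l) (w m)));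
  rewrite ?rev_uniq ?enum_uniq // => l l' m m' ll' mm'.
by rewrite !RopE op2_comm // ?(inj_eq inl_inj) ?(inj_eq inr_inj).
Qed.
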